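(* For every starting point $\mathbf{x}^{(0)}\in\Delta_n$, the trajectory $\mathbf{x}^{(t)}=g^t(\mathbf{x}^{(0)})$ converges as $t\to\infty$, and its limit is a fixed point of $g$.
   Context: $G=(V,E)$ is a finite undirected graph with $n$ vertices, $N_u$ the neighbourhood of $u$, $\Delta_n=\{\mathbf{x}\in\mathbb{R}^n_{\ge 0}:\sum_v\mathbf{x}_v=1\}$. For every edge $uv\in E$, $F_{uv}=F_{vu}:[-1,1]\to[-1,1]$ is continuously differentiable, $F_{uv}(0)=0$, increasing and odd. The map $g:\Delta_n\to\Delta_n$ is $g(\mathbf{x})_u=\mathbf{x}_u+\sum_{v\in N_u}\mathbf{x}_u\mathbf{x}_vF_{uv}(\mathbf{x}_u-\mathbf{x}_v)$; a fixed point is $\mathbf{p}$ with $g(\mathbf{p})=\mathbf{p}$. *)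

From HB Require Import structures.
From mathcomp Require Import all_boot all_order all_algebra.
From mathcomp Require Import all_classical all_reals all_analysis.
Set Implicit Arguments. Unset Strict Implicit. Unset Printing Implicit Defensive.
Import Order.TTheory GRing.Theory Num.Theory.
Import numFieldNormedType.Exports.
Local Open Scope ring_scope.
Local Open Scope classical_set_scope.

Definition in_simplex (R : realType) (n : nat) (x : 'rV[R]_n) : Prop :=
  (forall u : 'I_n, 0 <= x ord0 u) /\ \sum_(u < n) x ord0 u = 1.

Definition simple_graph (n : nat) (adj : rel 'I_n) : Prop :=
  (forall u v, adj u v = adj v u) /\ (forall u, ~~ adj u u).

(* F_uv is given as a
   function R -> R; only its restriction to [-1,1] is relevant. Continuous
   differentiability is required of F on all of R (every C^1 function on [-1,1]
   extends to a C^1 function on R). *)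
Definition edge_fun_ok (R : realType) (f : R -> R) : Prop :=
  [/\ (forall x, derivable f x 1) /\ continuous (f^`()),
      (forall x, -1 <= x <= 1 -> -1 <= f x <= 1),
      f 0 = 0,
      (forall x y, -1 <= x <= 1 -> -1 <= y <= 1 -> x < y -> f x < f y)
    & (forall x, -1 <= x <= 1 -> f (- x) = - f x)].

Definition gmap (R : realType) (n : nat) (adj : rel 'I_n)
  (F : 'I_n -> 'I_n -> R -> R) (x : 'rV[R]_n) : 'rV[R]_n :=
  \row_(u < n) (x ord0 u + \sum_(v < n | adj u v)
                   x ord0 u * x ord0 v * F u v (x ord0 u - x ord0 v)).

From HB Require Import structures.
From mathcomp Require Import all_boot all_order all_algebra.
From mathcomp Require Import all_classical all_reals all_analysis.
From mathcomp Require Import lra zify.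

Set Implicit Arguments.
Unset Strict Implicit.
Unset Printing Implicit Defensive.
Import Order.TTheory GRing.Theory Num.Theory.
Import numFieldNormedType.Exports.
Local Open Scope ring_scope.
Local Open Scope classical_set_scope.

(* The map moves mass along each edge towards the endpoint with the larger
   coordinate, antisymmetrically, so for every nondecreasing weight [s] the
   weighted increment [\sum_u s (x_u) * (g(x)_u - x_u)] is nonnegative.  A
   constant [s] gives conservation of mass; [s z = 2 z] shows that
   [\sum_u x_u ^ 2] grows along the trajectory by at least the squared step, so
   the steps tend to 0; the indicator of [(c, +oo)], by convexity of the ramp
   [z |-> (z - c)^+], makes [\sum_u (x_u - c)^+] nondecreasing, hence convergent,
   for every [c].
   A coordinate that did not converge would oscillate between levels [a < b]
   with vanishing steps, hence come arbitrarily close to each centre of the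
   [2 n + 1] tents of width [2 d] tiling [[a, b]].  Each tent sum
   [\sum_u hat (x_u)] is a combination of ramp sums, so it converges, to a limit
   at least [d / 2]; but at any time the [n] coordinates lie in at most [n] of
   the tents, so the tent sums add up to at most [n d < (2 n + 1) d / 2].
   The limit is a fixed point since [g] is continuous. *)

Lemma term_le_sum (R : numDomainType) (I : finType) (f : I -> R) i :
  (forall j, 0 <= f j) -> f i <= \sum_j f j.
Proof. by move=> f_ge0; rewrite (bigD1 i) //= lerDl sumr_ge0. Qed.

Lemma sum_adj_swap (V : nmodType) (T : finType) (adj : rel T) (b : T -> T -> V) :
  (forall u v, adj u v = adj v u) ->
  \sum_u \sum_(v | adj u v) b u v = \sum_u \sum_(v | adj u v) b v u.
Proof.
move=> adj_sym; under eq_bigr do rewrite big_mkcond.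
rewrite exchange_big /=; apply: eq_bigr => u _; rewrite [RHS]big_mkcond.
by apply: eq_bigr => v _; rewrite adj_sym.
Qed.

Lemma cvg_sum (K : numFieldType) (V : normedModType K)
    (T : Type) (G : set_system T) {FG : Filter G}
    (I : Type) (r : seq I) (P : pred I) (f : I -> T -> V) (l : I -> V) :
  (forall i, P i -> f i @ G --> l i) ->
  (fun t => \sum_(i <- r | P i) f i t) @ G --> \sum_(i <- r | P i) l i.
Proof. by move=> fl; apply: cvg_big => //; exact: add_continuous. Qed.

Lemma cvg_mx_entries (T : topologicalType) (I : Type)
    (G : set_system I) {FG : Filter G}
    m n (X : I -> 'M[T]_(m, n)) (L : 'M[T]_(m, n)) :
  (forall i j, (fun t => X t i j) @ G --> L i j) -> X @ G --> L.
Proof.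
move=> XL A [P P_nbhs PA].
have : \forall t \near G, forall i j, P i j (X t i j).
  by do 2 apply: filter_forall => ?; exact: XL.
by apply: filterS => t; exact: PA.
Qed.

Section RealSequences.
Variable R : realType.
Implicit Types (u : R ^nat) (a b c d e l y : R).

Definition infinitely_often (P : nat -> Prop) :=
  forall N, exists2 k, (N <= k)%N & P k.

Lemma bounded_cvgn_or_oscillates u :
  has_lbound (range u) -> has_ubound (range u) ->
  cvgn u \/ exists a b, [/\ a < b, infinitely_often (fun t => u t < a)
                             & infinitely_often (fun t => b < u t)].
Proof.
move=> lbu ubu.
have infs_cvg := cvg_infs_sup ubu lbu; set A := sup _ in infs_cvg.
have sups_cvg := cvg_sups_inf ubu lbu; set B := inf _ in sups_cvg.
have infs_le t : infs u t <= u t.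
  by apply: ge_inf; [exact: has_lbound_sdrop | exists t => /=].
have le_sups t : u t <= sups u t.
  by apply: ub_le_sup; [exact: has_ubound_sdrop | exists t => /=].
have [AB|BA] := ltP A B; [right|left].
- have sdrop_neq0 N : sdrop u N !=set0 by exists (u N); exists N => /=.
  exists ((2 * A + B) / 3), ((A + 2 * B) / 3); split; first lra.
  + move=> N; have infsA : infs u N <= A.
      have := nondecreasing_cvgn_le (nondecreasing_infs lbu) (cvgP _ infs_cvg) N.
      by rewrite (cvg_lim _ infs_cvg).
    have : infs u N < (2 * A + B) / 3 by lra.
    by move=> /(inf_lt (sdrop_neq0 N)) [_ [k /= Nk <-] uk]; exists k.
  + move=> N; have supsB : B <= sups u N.
      have := nonincreasing_cvgn_ge (nonincreasing_sups ubu) (cvgP _ sups_cvg) N.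
      by rewrite (cvg_lim _ sups_cvg).
    have : (A + 2 * B) / 3 < sups u N by lra.
    by move=> /(sup_gt (sdrop_neq0 N)) [_ [k /= Nk <-] uk]; exists k.
- have AB : A <= B.
    apply: ler_cvg_to infs_cvg sups_cvg _.
    by apply: nearW => t; exact: le_trans (infs_le t) (le_sups t).
  have eAB : B = A by apply/eqP; rewrite eq_le BA AB.
  apply/cvg_ex; exists A; apply: (squeeze_cvgr _ infs_cvg (_ : sups u @ \oo --> A)).
  - by apply: nearW => t; rewrite infs_le le_sups.
  - by rewrite -eAB.
Qed.

Lemma exists_upcrossing u c s t : (s <= t)%N -> u s < c -> c <= u t ->
  exists k, [/\ (s <= k < t)%N, u k < c & c <= u k.+1].
Proof.
elim: t => [|t IHt]; first by rewrite leqn0 => /eqP-> /lt_geF->.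
rewrite leq_eqVlt => /predU1P[<- /lt_geF->//|]; rewrite ltnS => st us ct.
have [utc|ctu] := ltP (u t) c; first by exists t; rewrite st ltnSn.
have [k [/andP[sk kt] ukc cuk]] := IHt st us ctu.
by exists k; rewrite sk ltnS ltnW.
Qed.

Lemma infinitely_often_near u a b c e :
  (fun t => u t.+1 - u t) @ \oo --> 0 -> 0 < e -> a < c < b ->
  infinitely_often (fun t => u t < a) -> infinitely_often (fun t => b < u t) ->
  infinitely_often (fun t => `|u t - c| < e).
Proof.
move=> step0 e0 /andP[ac cb] ua bu N.
have [N0 _ small_step] := cvgr0_norm_lt _ step0 _ e0.
have [s Ns usa] := ua (maxn N N0).
have [t st btu] := bu s.
have [k [/andP[sk _] ukc cuk]] :=
  exists_upcrossing st (lt_trans usa ac) (ltW (lt_trans cb btu)).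
have Nk : (maxn N N0 <= k)%N := leq_trans Ns sk.
exists k.+1; first by apply: leqW; rewrite (leq_trans (leq_maxl _ _) Nk).
have := small_step k (leq_trans (leq_maxr _ _) Nk).
rewrite !ltr_norml => /andP[? ?]; apply/andP; split; lra.
Qed.

Lemma cvgr_infinitely_often_ge u c l :
  u @ \oo --> l -> infinitely_often (fun t => c <= u t) -> c <= l.
Proof.
move=> ul uc; rewrite leNgt; apply/negP => lc.
have [N _ ult] := cvgr_lt _ ul _ lc.
have [k Nk cuk] := uc N.
by have := ult k Nk; rewrite /= ltNge cuk.
Qed.

End RealSequences.

Section RampHat.
Variable R : realType.
Implicit Types (a c d y z : R).

Definition ramp c y : R := if c < y then y - c else 0.

(* The tent of height [d] on [[c - d, c + d]], as a combination of ramps. *)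
Definition hat c d y : R := ramp (c - d) y + ramp (c + d) y - ramp c y - ramp c y.

Lemma ramp_le c y z : y <= z -> ramp c y <= ramp c z.
Proof. by rewrite /ramp; case: (ltP c y); case: (ltP c z) => *; lra. Qed.

Lemma hat_ge0 c d y : 0 < d -> 0 <= hat c d y.
Proof.
rewrite /hat /ramp => d0.
by case: (ltP (c - d) y); case: (ltP (c + d) y); case: (ltP c y) => *; lra.
Qed.

Lemma hat_le c d y : 0 < d -> hat c d y <= d.
Proof.
rewrite /hat /ramp => d0.
by case: (ltP (c - d) y); case: (ltP (c + d) y); case: (ltP c y) => *; lra.
Qed.

Lemma hat_ge_half c d y : 0 < d -> `|y - c| < d / 2 -> d / 2 <= hat c d y.
Proof.
rewrite ltr_norml /hat /ramp => d0 /andP[? ?].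
by case: (ltP (c - d) y); case: (ltP (c + d) y); case: (ltP c y) => *; lra.
Qed.

Lemma hat_eq0 c d y : 0 < d -> d <= `|y - c| -> hat c d y = 0.
Proof.
rewrite ler_normr /hat /ramp => d0 /orP[] ?.
all: by case: (ltP (c - d) y); case: (ltP (c + d) y); case: (ltP c y) => *; lra.
Qed.

Lemma sum_hat_le m a d y : 0 < d ->
  \sum_(i < m) hat (a + (2 * i + 1)%:R * d) d y <= d.
Proof.
move=> d0; set c := fun i : 'I_m => a + (2 * i + 1)%:R * d.
have [[i yci]|far] := pselect (exists i, `|y - c i| < d); last first.
  rewrite big1 ?ltW // => i _; apply: hat_eq0 => //.
  by rewrite leNgt; apply/negP => yci; apply: far; exists i.
rewrite (bigD1 i) //= big1 ?addr0; first exact: hat_le.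
move=> j ji; apply: hat_eq0 => //; rewrite -/(c j).
have cji : 2 * d <= `|c j - c i|.
  have -> : c j - c i = 2 * d * (j%:R - i%:R).
    by rewrite /c /= !natrD; lra.
  rewrite normrM [`|2 * d|]ger0_norm ?ler_pMr; try lra.
  have [ij|ij|/val_inj eij] := ltngtP i j; last by rewrite eij eqxx in ji.
  - have : i.+1%:R <= j%:R :> R by rewrite ler_nat.
    by rewrite -natr1 => ?; rewrite ger0_norm; lra.
  - have : j.+1%:R <= i%:R :> R by rewrite ler_nat.
    by rewrite -natr1 => ?; rewrite ltr0_norm; lra.
have := ler_distD y (c j) (c i); rewrite [`|c j - y|]distrC; lra.
Qed.

End RampHat.

Section CoordinateConvergence.
Variables (R : realType) (n : nat) (x : nat -> 'I_n -> R).
Hypothesis sum_ramp_cvg : forall c, cvgn (fun t => \sum_w ramp c (x t w)).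

Lemma cvgn_sum_hat c d : cvgn (fun t => \sum_w hat c d (x t w)).
Proof.
have -> : (fun t => \sum_w hat c d (x t w)) =
    (fun t => \sum_w ramp (c - d) (x t w)) + (fun t => \sum_w ramp (c + d) (x t w))
    - (fun t => \sum_w ramp c (x t w)) - (fun t => \sum_w ramp c (x t w)).
  by apply/funext => t; rewrite /hat /= !sumrB big_split.
by apply: is_cvgB => //; apply: is_cvgB => //; apply: is_cvgD.
Qed.

Lemma cvgn_coord_of_cvgn_sum_ramp u :
  has_lbound (range (x^~ u)) -> has_ubound (range (x^~ u)) ->
  (fun t => x t.+1 u - x t u) @ \oo --> 0 -> cvgn (x^~ u).
Proof.
move=> lbu ubu step0.
have [//|[a [b [ab ua bu]]]] := bounded_cvgn_or_oscillates lbu ubu.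
pose m := (2 * n).+1.
pose d := (b - a) / (2 * m%:R).
have d0 : 0 < d by rewrite divr_gt0 ?subr_gt0 // mulr_gt0 ?ltr0n.
have d2 : 0 < d / 2 by lra.
have m_d : 2 * m%:R * d = b - a by rewrite /d mulrC divfK // mulf_neq0 ?pnatr_eq0.
pose c (i : 'I_m) := a + (2 * i + 1)%:R * d.
have c_in i : a < c i < b.
  have : (2 * i + 1).+1%:R <= 2 * m%:R :> R.
    by rewrite -natrM ler_nat; have := ltn_ord i; lia.
  rewrite -natr1 /c => ?; apply/andP; split; last nra.
  by rewrite ltrDl mulr_gt0 // ltr0n addn1.
pose T i t := \sum_w hat (c i) d (x t w).
have cvgT i : T i @ \oo --> limn (T i) by exact: cvgn_sum_hat.
have limT_ge i : d / 2 <= limn (T i).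
  apply: (cvgr_infinitely_often_ge (cvgT i)) => N.
  have [k Nk xk] := infinitely_often_near step0 d2 (c_in i) ua bu N.
  exists k => //; apply: le_trans (hat_ge_half d0 xk) _.
  by rewrite /T; apply: term_le_sum => w; exact: hat_ge0.
have sum_limT_le : \sum_(i < m) limn (T i) <= n%:R * d.
  apply: cvgr_to_le (cvg_sum (fun i _ => cvgT i)) _.
  apply: nearW => t; rewrite /T exchange_big /= mulr_natl.
  rewrite -[n in d *+ n]card_ord -sumr_const.
  by apply: ler_sum => w _; exact: sum_hat_le.
have : m%:R * (d / 2) <= n%:R * d.
  rewrite mulr_natl -[m in _ *+ m]card_ord -sumr_const.
  by apply: le_trans sum_limT_le; apply: ler_sum => i _; exact: limT_ge.
by rewrite /m -addn1 natrD natrM; nra.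
Qed.

End CoordinateConvergence.

Lemma in_simplex_le1 (R : realType) n (y : 'rV[R]_n) u :
  in_simplex y -> y ord0 u <= 1.
Proof. by move=> [y_ge0 <-]; exact: term_le_sum. Qed.

Lemma in_simplex_dist_le1 (R : realType) n (y : 'rV[R]_n) u v :
  in_simplex y -> -1 <= y ord0 u - y ord0 v <= 1.
Proof.
move=> y_simplex; have [y_ge0 _] := y_simplex.
have := y_ge0 u; have := y_ge0 v.
have := in_simplex_le1 u y_simplex; have := in_simplex_le1 v y_simplex.
by move=> *; apply/andP; split; lra.
Qed.

Lemma in_simplex_lim (R : realType) n (X : nat -> 'rV[R]_n) (p : 'rV[R]_n) :
  (forall t, in_simplex (X t)) ->
  (forall u, (fun t => X t ord0 u) @ \oo --> p ord0 u) -> in_simplex p.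
Proof.
move=> X_simplex Xp; split.
  by move=> u; apply: cvgr_to_ge (Xp u) _; apply: nearW => t; case: (X_simplex t).
have sum_cvg1 : (fun t => \sum_u X t ord0 u) @ \oo --> (1 : R).
  by under eq_cvg do rewrite (X_simplex _).2; exact: cvg_cst.
exact: cvg_unique (cvg_sum (fun u _ => Xp u)) sum_cvg1.
Qed.

Lemma edge_fun_homo (R : realType) (f : R -> R) a b : edge_fun_ok f ->
  -1 <= a <= 1 -> -1 <= b <= 1 -> a <= b -> f a <= f b.
Proof.
move=> [_ _ _ f_mono _] ha hb; rewrite le_eqVlt => /predU1P[->//|ab].
exact/ltW/f_mono.
Qed.

Section SimplexMap.
Variables (R : realType) (n : nat) (adj : rel 'I_n) (F : 'I_n -> 'I_n -> R -> R).
Hypothesis adj_sym : forall u v, adj u v = adj v u.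
Hypothesis F_sym : forall u v, adj u v -> F u v = F v u.
Hypothesis F_ok : forall u v, adj u v -> edge_fun_ok (F u v).
Implicit Types (y : 'rV[R]_n) (s : R -> R).

Local Notation g := (gmap adj F).

Definition flow y u v := y ord0 u * y ord0 v * F u v (y ord0 u - y ord0 v).

Lemma gmapE y u : g y ord0 u = y ord0 u + \sum_(v | adj u v) flow y u v.
Proof. by rewrite mxE. Qed.

Lemma flow_antisym y u v : in_simplex y -> adj u v -> flow y v u = - flow y u v.
Proof.
move=> y_simplex uv; have [_ _ _ _ F_odd] := F_ok uv.
rewrite /flow -F_sym // -opprB F_odd ?in_simplex_dist_le1 //.
by rewrite mulrN [y ord0 v * _]mulrC.
Qed.

Lemma flow_sign y s u v : {homo s : a b / a <= b} -> in_simplex y -> adj u v ->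
  0 <= (s (y ord0 u) - s (y ord0 v)) * flow y u v.
Proof.
move=> s_homo y_simplex uv; have [y_ge0 _] := y_simplex.
have [_ _ F0 _ _] := F_ok uv.
have yuv_ge0 : 0 <= y ord0 u * y ord0 v by rewrite mulr_ge0.
have dom0 : -1 <= (0 : R) <= 1 by rewrite lerN10 ler01.
have domuv := in_simplex_dist_le1 u v y_simplex.
rewrite /flow; have [vu|uv'] := leP (y ord0 v) (y ord0 u).
- apply: mulr_ge0; first by rewrite subr_ge0 s_homo.
  by apply: mulr_ge0 => //; rewrite -F0 (edge_fun_homo (F_ok uv)) ?subr_ge0.
- apply: mulr_le0; first by rewrite subr_le0 s_homo // ltW.
  apply: mulr_ge0_le0 => //; rewrite -[leRHS]F0.
  by rewrite (edge_fun_homo (F_ok uv)) // subr_le0 ltW.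
Qed.

(* Pairing the flow on each edge with its reverse: the weighted increment is half
   of [\sum_u \sum_(v | adj u v) (s y_u - s y_v) * flow y u v]. *)
Lemma sum_weighted_increment_ge0 s y : {homo s : a b / a <= b} -> in_simplex y ->
  0 <= \sum_u s (y ord0 u) * (g y ord0 u - y ord0 u).
Proof.
move=> s_homo y_simplex.
pose S (h : 'I_n -> 'I_n -> R) := \sum_u \sum_(v | adj u v) h u v * flow y u v.
have -> : \sum_u s (y ord0 u) * (g y ord0 u - y ord0 u) =
          S (fun u _ => s (y ord0 u)).
  by apply: eq_bigr => u _; rewrite gmapE addrC addKr mulr_sumr.
have swap : S (fun u _ => s (y ord0 u)) = - S (fun _ v => s (y ord0 v)).
  rewrite /S (sum_adj_swap _ adj_sym) -sumrN; apply: eq_bigr => u _.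
  by rewrite -sumrN; apply: eq_bigr => v uv; rewrite flow_antisym // mulrN.
have : 0 <= S (fun u v => s (y ord0 u) - s (y ord0 v)).
  by apply: sumr_ge0 => u _; apply: sumr_ge0 => v uv; exact: flow_sign.
have -> : S (fun u v => s (y ord0 u) - s (y ord0 v)) =
    S (fun u _ => s (y ord0 u)) - S (fun _ v => s (y ord0 v)).
  rewrite /S -sumrB; apply: eq_bigr => u _; rewrite -sumrB.
  by apply: eq_bigr => v _; rewrite mulrBl.
lra.
Qed.

Lemma sum_gmap y : in_simplex y -> \sum_u g y ord0 u = \sum_u y ord0 u.
Proof.
move=> y_simplex; apply/eqP; rewrite -subr_eq0 -sumrB eq_le.
have := @sum_weighted_increment_ge0 (fun=> 1) y (fun _ _ _ => lexx _) y_simplex.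
have := @sum_weighted_increment_ge0 (fun=> -1) y (fun _ _ _ => lexx _) y_simplex.
under eq_bigr do rewrite mulN1r.
under [\sum_u 1 * _]eq_bigr do rewrite mul1r.
by rewrite sumrN oppr_ge0 => -> ->.
Qed.

Lemma gmap_ge0 y u : in_simplex y -> 0 <= g y ord0 u.
Proof.
move=> y_simplex; have [y_ge0 y_sum1] := y_simplex.
set rate := \sum_(v | adj u v) y ord0 v * F u v (y ord0 u - y ord0 v).
have -> : g y ord0 u = y ord0 u * (1 + rate).
  rewrite gmapE mulrDr mulr1 mulr_sumr; congr (_ + _).
  by apply: eq_bigr => v _; rewrite mulrA.
have rate_ge : - \sum_(v | adj u v) y ord0 v <= rate.
  rewrite -sumrN; apply: ler_sum => v uv; have [_ F_range _ _ _] := F_ok uv.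
  have /andP[F_ge _] := F_range _ (in_simplex_dist_le1 u v y_simplex).
  by rewrite -[leLHS]mulrN1; exact: ler_wpM2l.
have : \sum_(v | adj u v) y ord0 v <= 1.
  by rewrite -y_sum1 [leRHS](bigID (adj u)) /= lerDl sumr_ge0.
by move=> ?; apply: mulr_ge0 => //; lra.
Qed.

Lemma gmap_simplex y : in_simplex y -> in_simplex (g y).
Proof.
move=> y_simplex; split; first by move=> u; exact: gmap_ge0.
by rewrite sum_gmap //; case: y_simplex.
Qed.

(* [ramp c] is convex, with slope [c < z] at [z]. *)
Lemma sum_ramp_le_gmap c y : in_simplex y ->
  \sum_w ramp c (y ord0 w) <= \sum_w ramp c (g y ord0 w).
Proof.
move=> y_simplex; rewrite -subr_ge0 -sumrB.
have slope_homo : {homo (fun z => if c < z then 1 else 0 : R) : a b / a <= b}.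
  by move=> a b ab; case: (ltP c a); case: (ltP c b) => *; lra.
apply: le_trans (sum_weighted_increment_ge0 slope_homo y_simplex) _.
apply: ler_sum => w _; rewrite /ramp.
by case: (ltP c (y ord0 w)); case: (ltP c (g y ord0 w)) => *; lra.
Qed.

Lemma sum_sqr_increment_le y : in_simplex y ->
  \sum_w (g y ord0 w - y ord0 w) ^+ 2 <=
  \sum_w g y ord0 w ^+ 2 - \sum_w y ord0 w ^+ 2.
Proof.
move=> y_simplex; rewrite -sumrB -subr_ge0 -sumrB.
have double_homo : {homo (fun z : R => 2 * z) : a b / a <= b} by move=> a b ab; lra.
apply: le_trans (sum_weighted_increment_ge0 double_homo y_simplex) _.
by apply: ler_sum => w _; nra.
Qed.

Lemma cvg_gmap (X : nat -> 'rV[R]_n) (p : 'rV[R]_n) u :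
  (forall v, (fun t => X t ord0 v) @ \oo --> p ord0 v) ->
  (fun t => g (X t) ord0 u) @ \oo --> g p ord0 u.
Proof.
move=> Xp; rewrite gmapE; under eq_cvg do rewrite gmapE.
apply: cvgD; first exact: Xp.
apply: cvg_sum => v uv; apply: cvgM; first by apply: cvgM; exact: Xp.
have [[F_der _] _ _ _ _] := F_ok uv.
apply: continuous_cvg; last by apply: cvgB; exact: Xp.
by apply: differentiable_continuous; apply/derivable1_diffP.
Qed.

Section Trajectory.
Variable x0 : 'rV[R]_n.
Hypothesis x0_simplex : in_simplex x0.
Local Notation x t := (iter t g x0 ord0).

Lemma traj_simplex t : in_simplex (iter t g x0).
Proof. by elim: t => [//|t IHt]; rewrite iterS; exact: gmap_simplex. Qed.

Lemma cvgn_traj_sum_ramp c : cvgn (fun t => \sum_w ramp c (x t w)).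
Proof.
apply: nondecreasing_is_cvgn.
  apply/nondecreasing_seqP => t.
  by rewrite iterS; exact: sum_ramp_le_gmap (traj_simplex t).
exists (\sum_(w < n) ramp c 1) => _ [t _ <-].
by apply: ler_sum => w _; apply: ramp_le; exact: in_simplex_le1 (traj_simplex t).
Qed.

Lemma traj_step_cvg0 u : (fun t => x t.+1 u - x t u) @ \oo --> 0.
Proof.
pose Q t := \sum_w x t w ^+ 2.
have Q_incr t : \sum_w (x t.+1 w - x t w) ^+ 2 <= Q t.+1 - Q t.
  by rewrite /Q iterS; exact: sum_sqr_increment_le (traj_simplex t).
have cvgQ : cvgn Q.
  apply: nondecreasing_is_cvgn.
    apply/nondecreasing_seqP => t; rewrite -subr_ge0; apply: le_trans (Q_incr t).
    by apply: sumr_ge0 => w _; exact: sqr_ge0.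
  exists (\sum_(w < n) 1) => _ [t _ <-]; apply: ler_sum => w _.
  have [x_ge0 _] := traj_simplex t; have := in_simplex_le1 w (traj_simplex t).
  by rewrite expr_le1 // x_ge0.
have dQ0 : (fun t => Q t.+1 - Q t) @ \oo --> 0.
  by rewrite -(subrr (limn Q)); apply: cvgB => //; rewrite cvg_shiftS.
apply/cvgr0Pnorm_lt => e e0.
have [N _ dQ_small] := cvgr0_norm_lt _ dQ0 _ (exprn_gt0 2 e0).
exists N => // t Nt /=.
have : (x t.+1 u - x t u) ^+ 2 < e ^+ 2.
  apply: le_lt_trans (le_trans (term_le_sum _ (fun w => sqr_ge0 _)) (Q_incr t)) _.
  exact: le_lt_trans (ler_norm _) (dQ_small t Nt).
rewrite ltr_norml; nra.
Qed.

Lemma cvgn_traj_coord u : cvgn (fun t => x t u).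
Proof.
apply: (cvgn_coord_of_cvgn_sum_ramp cvgn_traj_sum_ramp _ _ (traj_step_cvg0 u)).
- by exists 0 => _ [t _ <-]; case: (traj_simplex t).
- by exists 1 => _ [t _ <-]; exact: in_simplex_le1 (traj_simplex t).
Qed.

Lemma traj_limit_fixed (p : 'rV[R]_n) :
  (forall u, (fun t => x t u) @ \oo --> p ord0 u) -> g p = p.
Proof.
move=> traj_p; apply/rowP => u.
have traj_shift_p : (fun t => x t.+1 u) @ \oo --> p ord0 u.
  by rewrite (cvg_shiftS (fun t => x t u)).
exact: cvg_unique (cvg_gmap (X := fun t => iter t g x0) traj_p) traj_shift_p.
Qed.

End Trajectory.

End SimplexMap.

Theorem mainTheorem4 (R : realType) (n : nat) (adj : rel 'I_n)
  (F : 'I_n -> 'I_n -> R -> R) :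
  simple_graph adj ->
  (forall u v, adj u v -> F u v = F v u) ->
  (forall u v, adj u v -> edge_fun_ok (F u v)) ->
  forall x0 : 'rV[R]_n, in_simplex x0 ->
  exists p : 'rV[R]_n,
    (fun t : nat => iter t (gmap adj F) x0) @ \oo --> p /\
    in_simplex p /\ gmap adj F p = p.
Proof.
move=> [adj_sym _] F_sym F_ok x0 x0_simplex.
pose p := \row_u limn (fun t => iter t (gmap adj F) x0 ord0 u).
have traj_p u : (fun t => iter t (gmap adj F) x0 ord0 u) @ \oo --> p ord0 u.
  by rewrite mxE; exact: cvgn_traj_coord.
exists p; split; first by apply: cvg_mx_entries => i u; rewrite ord1.
have traj_in_simplex := traj_simplex adj_sym F_sym F_ok x0_simplex.
split; first exact: in_simplex_lim traj_in_simplex traj_p.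
exact: traj_limit_fixed.
Qed.
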